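(* With probability at least $1-\delta/4$, for all $1\le t\le T$ and all $\mathbf{x}\in\mathcal{X}$, \[ |\mu_{\mathrm{fb}[t]}(\mathbf{x})-\widetilde\mu_{\mathrm{fb}[t]}(\mathbf{x})|\le 2\hat K_0\frac{t^2(L+1)\varepsilon}{\sigma^4}\Big(B'+\sigma\sqrt{2\log(4T/\delta)}\Big). \]
   Context: $\mathcal{X}$ is a finite subset of the unit ball of $\mathbb{R}^d$; $f:\mathcal{X}\to\mathbb{R}$ with $|f(\mathbf{x})|\le B'$; observations $y_\tau=f(\mathbf{x}_\tau)+\zeta_\tau$ with $\zeta_\tau\sim\mathcal{N}(0,\sigma^2)$ i.i.d.; $\delta\in(0,1)$, $T$ is the horizon. $k$ is the exact NTK with $k\le K_0$, $\widetilde k(\mathbf{x},\mathbf{x}')=\langle\nabla_\theta f(\mathbf{x};\theta_0),\nabla_\theta f(\mathbf{x}';\theta_0)\rangle$ the empirical NTK of a network with $L+1$ layers; assume $|\widetilde k-k|\le(L+1)\varepsilon$ on $\mathcal{X}\times\mathcal{X}$, $(L+1)\varepsilon\le1$, $\sigma^2\le1$, $\hat K_0=\max\{1,K_0\}$. Queries are indexed sequentially and $\mathrm{fb}[t]\le t-1$ is the number of observed queries when $\mathbf{x}_t$ is chosen. $\mu_{\mathrm{fb}[t]}(\mathbf{x})=\mathbf{k}_t(\mathbf{x})^\top(\mathbf{K}_t+\sigma^2I)^{-1}\mathbf{y}_t$ with $\mathbf{k}_t(\mathbf{x})=(k(\mathbf{x},\mathbf{x}_\tau))_{\tau\le\mathrm{fb}[t]}$,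 $\mathbf{K}_t=(k(\mathbf{x}_\tau,\mathbf{x}_{\tau'}))_{\tau,\tau'\le\mathrm{fb}[t]}$, $\mathbf{y}_t=(y_\tau)_{\tau\le\mathrm{fb}[t]}$; $\widetilde\mu_{\mathrm{fb}[t]}$ is defined identically with $\widetilde k$. *)

From HB Require Import structures.
From mathcomp Require Import all_boot all_order all_algebra.
From mathcomp Require Import all_classical all_reals all_analysis.
From mathcomp Require Import probability normal_distribution.
Set Implicit Arguments. Unset Strict Implicit. Unset Printing Implicit Defensive.
Import Order.TTheory GRing.Theory Num.Theory.
Local Open Scope classical_set_scope.
Local Open Scope ring_scope.

Definition kernel_sym (R : realType) (X : Type) (k : X -> X -> R) :=
  forall x x', k x x' = k x' x.

Definition kernel_psd (R : realType) (X : Type) (k : X -> X -> R) :=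
  forall (n : nat) (xs : 'I_n -> X) (c : 'I_n -> R),
    0 <= \sum_(i < n) \sum_(j < n) c i * c j * k (xs i) (xs j).

(* empirical NTK: inner product of the gradient features g x = grad_theta f(x; theta_0) *)
Definition emp_kernel (R : realType) (X : Type) (p : nat) (g : X -> 'rV[R]_p)
  (x x' : X) : R := (g x *m (g x')^T) 0 0.

(* GP posterior mean  k_n(x)^T (K_n + s2 I)^{-1} y_n  built from n observations
   (xs i, ys i), i < n  (i corresponds to the query index i+1). *)
Definition gp_mean (R : realType) (X : Type) (k : X -> X -> R) (s2 : R) (n : nat)
  (xs : 'I_n -> X) (ys : 'I_n -> R) (x : X) : R :=
  ((\row_(i < n) k x (xs i))
     *m invmx ((\matrix_(i < n, j < n) k (xs i) (xs j)) + s2%:M)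
     *m (\col_(i < n) ys i)) 0 0.

Definition mu_fb (R : realType) (d : measure_display) (Omega : measurableType d)
  (X : Type) (k : X -> X -> R) (sigma : R) (f : X -> R)
  (zeta : nat -> Omega -> R) (xq : nat -> Omega -> X) (fb : nat -> Omega -> nat)
  (t : nat) (w : Omega) (x : X) : R :=
  gp_mean k (sigma ^+ 2) (fun i : 'I_(fb t w) => xq i.+1 w)
    (fun i : 'I_(fb t w) => f (xq i.+1 w) + zeta i.+1 w) x.

(* X has law N(0, sigma^2)  (normal_prob m s has standard deviation s) *)
Definition normal_law (R : realType) (d : measure_display) (Omega : measurableType d)
  (P : probability Omega R) (Z : Omega -> R) (sigma : R) :=
  forall A : set R, measurable A -> P (Z @^-1` A) = normal_prob 0 sigma A.

(* mutual independence of zeta_1, ..., zeta_T (product rule over the whole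
   family; taking A j = setT recovers every subfamily) *)
Definition mutually_independent (R : realType) (d : measure_display)
  (Omega : measurableType d) (P : probability Omega R)
  (zeta : nat -> Omega -> R) (T : nat) :=
  forall A : nat -> set R, (forall j, measurable (A j)) ->
    P (\bigcap_(j in [set j : nat | (1 <= j <= T)%N]) (zeta j @^-1` A j)) =
    (\prod_(1 <= j < T.+1) P (zeta j @^-1` A j))%E.

(* Off an event of probability at most delta/4, every noise value satisfies
   |zeta_tau| <= c := sigma sqrt(2 ln(4T/delta)): the Gaussian tail bound
   P(|zeta| > c) <= exp(-c^2 / 2 sigma^2) = delta/(4T), obtained by comparing
   the density on [c, +oo[ with exp(-c^2/2 sigma^2) times the density centred
   at c, and a union bound over tau <= T.  On that event the observations are
   bounded by Y := B' + c and the claim is deterministic.  With PSD Gram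
   matrices K1, K2 and s2 = sigma^2, the matrices Ki + s2 I are invertible
   with s2 |v| <= |(Ki + s2 I) v|.  Writing a, b for the two solved systems,
   mu1 - mu2 = (k1 - k2)(x)^T a + k2(x)^T (a - b) and
   (K1 + s2 I)(a - b) = (K2 - K1) b, so Cauchy-Schwarz with the entrywise
   kernel error (L+1) eps gives
   |mu1 - mu2| <= n e Y / s2 + n^2 (K0 + e) e Y / s2^2, where n = fb[t] < t
   and K0 + e bounds the empirical kernel (again by Cauchy-Schwarz on the
   gradient features). *)

From HB Require Import structures.
From mathcomp Require Import all_boot all_order all_algebra.
From mathcomp Require Import all_classical all_reals all_analysis.
From mathcomp Require Import probability normal_distribution measurable_realfun.
From mathcomp Require Import ring lra.
Import Order.TTheory GRing.Theory Num.Theory.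
Local Open Scope classical_set_scope.
Local Open Scope ring_scope.

Section normal_tail.
Context {R : realType}.
Local Open Scope ereal_scope.
Notation mu := (@lebesgue_measure R).

Lemma normal_pdf0_sym {s : R} : s != 0%R -> normal_pdf 0 s =1 normal_pdf 0 s \o -%R.
Proof. by move=> s0 x; rewrite /= !normal_pdfE // /normal_fun !subr0 sqrrN. Qed.

Lemma integral_normal_pdf0_ge0 (s : R) : s != 0%R ->
  \int[mu]_(x in [set x : R | 0 <= x]%R) (normal_pdf 0 s x)%:E = 2^-1%:E.
Proof.
move=> s0; have := @ge0_symfun_integralT R _ (normal_pdf_ge0 0 s)
  (continuous_normal_pdf s0) (normal_pdf0_sym s0).
rewrite integral_normal_pdf.
have : 0 <= \int[mu]_(x in [set x : R | 0 <= x]%R) (normal_pdf 0 s x)%:E.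
  by apply: integral_ge0 => x _; rewrite lee_fin normal_pdf_ge0.
case: (\int[mu]_(x in _) _) => [r _| // |//]; last by rewrite mulry gtr0_sg // mul1e.
move/eqP; rewrite -EFinM eqe => /eqP r2.
by congr EFin; apply: (@mulfI _ 2) => //; rewrite -r2 mulfV.
Qed.

Lemma integral_normal_pdf_itvcy_center (s c : R) : s != 0%R ->
  \int[mu]_(x in `[c, +oo[) (normal_pdf c s x)%:E =
  \int[mu]_(x in `[0%R, +oo[) (normal_pdf 0 s x)%:E.
Proof.
move=> s0; pose F x : R := (x + c)%R.
have F'E : F^`()%classic = cst 1%R.
  by apply/funext => x; rewrite /F derive1E deriveD // derive_id derive_cst addr0.
transitivity (\int[mu]_(x in `[F 0%R, +oo[) (normal_pdf c s x)%:E).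
  by rewrite /F add0r.
rewrite (increasing_ge0_integration_by_substitutiony (F := F)).
- apply: eq_integral => x _; rewrite F'E /= mulr1 !normal_pdfE //.
  by rewrite /normal_fun /F /= addrK subr0.
- by move=> x y _ _; rewrite /F ltrD2r.
- by rewrite F'E => ? _; exact: cvg_cst.
- by rewrite F'E; exact: is_cvg_cst.
- by rewrite F'E; exact: is_cvg_cst.
- split; first by move=> x _; exact: derivableD.
  by apply: cvg_at_right_filter; apply: cvgD; [exact: cvg_id | exact: cvg_cst].
- exact: cvg_addrr.
- apply/continuous_within_itvcyP; split => [x _|]; first exact: continuous_normal_pdf.
  by apply: cvg_at_right_filter; exact: continuous_normal_pdf.
- by move=> x _; exact: normal_pdf_ge0.
Qed.

Lemma normal_pdf0_le_center (s c x : R) : s != 0%R -> (0 <= c <= x)%R ->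
  (normal_pdf 0 s x <= expR (- c ^+ 2 / (s ^+ 2 *+ 2)) * normal_pdf c s x)%R.
Proof.
move=> s0 /andP[c0 cx]; rewrite !normal_pdfE // /normal_fun mulrCA -expRD.
rewrite ler_pM2l ?normal_peak_gt0 // ler_expR !mulNr -opprD lerN2 -mulrDl.
have s2 : (0 < s ^+ 2 *+ 2)%R by rewrite pmulrn_lgt0 // exprn_even_gt0.
by rewrite ler_pM2r ?invr_gt0 // subr0; nra.
Qed.

Lemma normal_prob0_itvcy (s c : R) : s != 0%R -> (0 <= c)%R ->
  normal_prob 0 s `[c, +oo[ <= (expR (- c ^+ 2 / (s ^+ 2 *+ 2)) / 2)%:E.
Proof.
move=> s0 c0; set u := expR _.
have mpdf m : measurable_fun `[c, +oo[ (EFin \o normal_pdf m s).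
  by apply/measurable_EFinP/measurable_funTS; exact: measurable_normal_pdf.
apply: (@le_trans _ _ (\int[mu]_(x in `[c, +oo[) (u%:E * (normal_pdf c s x)%:E))).
  apply: ge0_le_integral => //.
  - by move=> x _; rewrite lee_fin normal_pdf_ge0.
  - exact: mpdf.
  - exact: emeasurable_funM (mpdf c).
  - move=> x; rewrite /= in_itv /= andbT => cx.
    by rewrite -EFinM lee_fin normal_pdf0_le_center // c0 cx.
rewrite ge0_integralZl ?lee_fin ?expR_ge0 //; last 2 first.
- exact: mpdf.
- by move=> x _; rewrite lee_fin normal_pdf_ge0.
by rewrite integral_normal_pdf_itvcy_center // set_itvcy integral_normal_pdf0_ge0 // -EFinM.
Qed.

Lemma normal_prob0_itvNy (s c : R) : s != 0%R ->
  normal_prob 0 s `]-oo, (- c)%R] = normal_prob 0 s `[c, +oo[.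
Proof.
move=> s0; rewrite /normal_prob ge0_integration_by_substitutionNy.
- by apply: eq_integral => x _; rewrite (normal_pdf0_sym s0 x).
- apply/continuous_within_itvNycP; split => [x _|]; first exact: continuous_normal_pdf.
  by apply: cvg_at_left_filter; exact: continuous_normal_pdf.
- by move=> x _; exact: normal_pdf_ge0.
Qed.

Lemma measurable_norm_gt (c : R) : measurable [set r : R | (c < `|r|)%R].
Proof.
have -> : [set r : R | (c < `|r|)%R] = Num.norm @^-1` `]c, +oo[.
  by apply/seteqP; split => x /=; rewrite in_itv /= andbT.
by apply: measurable_funPTI; exact: measurable_itv.
Qed.

Lemma normal_prob0_norm_gt (s c : R) : s != 0%R -> (0 <= c)%R ->
  normal_prob 0 s [set r | (c < `|r|)%R] <= (expR (- c ^+ 2 / (s ^+ 2 *+ 2)))%:E.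
Proof.
move=> s0 c0.
have mNy : measurable `]-oo, (- c)%R] by exact: measurable_itv.
have my : measurable `[c, +oo[ by exact: measurable_itv.
have tails : [set r | (c < `|r|)%R] `<=` `]-oo, (- c)%R] `|` `[c, +oo[.
  move=> x /= cx; rewrite !in_itv /=.
  have [x0|x0] := lerP 0 x; [right | left].
    by rewrite andbT ltW // -(ger0_norm x0).
  by rewrite lerNr ltW // -(ltr0_norm x0).
apply: (@le_trans _ _ (normal_prob 0 s (`]-oo, (- c)%R] `|` `[c, +oo[))).
  by apply: le_measure; rewrite ?inE //; [exact: measurable_norm_gt | exact: measurableU].
apply: le_trans (@measureU2 _ _ _ (normal_prob 0 s) _ _ mNy my) _.
have hy := normal_prob0_itvcy s c s0 c0.
have hNy : normal_prob 0 s `]-oo, (- c)%R] <= (expR (- c ^+ 2 / (s ^+ 2 *+ 2)) / 2)%:E.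
  by rewrite normal_prob0_itvNy.
by apply: le_trans (leeD hNy hy) _; rewrite -EFinD -splitr.
Qed.

End normal_tail.

Lemma gauss_threshold_union_le (R : realType) (s delta : R) (T : nat) :
  0 < s -> 0 < delta <= 1 ->
  T%:R * expR (- (s * Num.sqrt (2 * ln (4 * T%:R / delta))) ^+ 2 / (s ^+ 2 *+ 2))
    <= delta / 4.
Proof.
move=> s0 /andP[d0 d1]; case: T => [|T]; first by rewrite mul0r divr_ge0 // ltW.
set a := 4 * _ / delta.
have a0 : 0 < a by rewrite divr_gt0 // mulr_gt0.
have ln_a : 0 <= ln a.
  have T1 : 1 <= T.+1%:R :> R by rewrite ler1n.
  by rewrite ln_ge0 // ler_pdivlMr // mul1r; lra.
rewrite exprMn sqr_sqrtr ?mulr_ge0 //.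
have -> : - (s ^+ 2 * (2 * ln a)) / (s ^+ 2 *+ 2) = - ln a.
  by field; rewrite gt_eqF // exprn_gt0.
rewrite expRN lnK ?posrE // /a invf_div.
have T0 : T.+1%:R != 0 :> R by rewrite pnatr_eq0.
by have -> : T.+1%:R * (delta / (4 * T.+1%:R)) = delta / 4 by field.
Qed.

Lemma normal_noise_bounded_event (R : realType) (d : measure_display)
    (Omega : measurableType d) (P : probability Omega R)
    (zeta : nat -> {RV P >-> R}) (s c : R) (T : nat) :
  0 < s -> 0 <= c ->
  (forall tau, (1 <= tau <= T)%N -> normal_law P (zeta tau) s) ->
  exists E : set Omega, [/\ measurable E,
    (P E >= (1 - T%:R * expR (- c ^+ 2 / (s ^+ 2 *+ 2)))%:E)%E &
    forall w, E w -> forall tau, (1 <= tau <= T)%N -> `|zeta tau w| <= c].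
Proof.
move=> s0 c0 law.
pose F j := (zeta j.+1 : Omega -> R) @^-1` [set r | c < `|r|].
have mF j : measurable (F j).
  by apply: measurable_funPTI; exact: measurable_norm_gt.
pose U := \big[setU/set0]_(j < T) F j.
have mU : measurable U by apply: bigsetU_measurable => j _; exact: mF.
exists (~` U); split; first exact: measurableC.
- have PF (j : 'I_T) : (P (F j) <= (expR (- c ^+ 2 / (s ^+ 2 *+ 2)))%:E)%E.
    rewrite /F law ?ltn_ord //; last exact: measurable_norm_gt.
    by apply: normal_prob0_norm_gt; rewrite // gt_eqF.
  have PU : (P U <= (T%:R * expR (- c ^+ 2 / (s ^+ 2 *+ 2)))%:E)%E.
    apply: le_trans (Boole_inequality P (fun j _ => mF j)) _.
    apply: le_trans; first by apply: lee_sum => j _; exact: PF.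
    by rewrite sumEFin sumr_const card_ord mulr_natl.
  rewrite probability_setC //; move: PU; case: (P U) => [r| |] //=.
  - by rewrite lee_fin => ?; rewrite -EFinD lee_fin; lra.
  - by rewrite leey.
- move=> w Uw tau /andP[tau1 tauT]; rewrite leNgt; apply/negP => ctau; apply: Uw.
  rewrite /U -bigcup_mkord; exists tau.-1; first by rewrite /= prednK.
  by rewrite /F /= prednK.
Qed.

Section vector_norm.
Context {R : rcfType}.

Lemma CauchySchwarz_sum {n} (a b : 'I_n -> R) :
  `|\sum_i a i * b i| <= Num.sqrt (\sum_i a i ^+ 2) * Num.sqrt (\sum_i b i ^+ 2).
Proof.
have sqr_sum_ge0 (c : 'I_n -> R) : 0 <= \sum_i c i ^+ 2.
  by apply: sumr_ge0 => i _; exact: sqr_ge0.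
rewrite -sqrtrM // -sqrtr_sqr ler_sqrt ?mulr_ge0 //.
set A := \sum_i a i ^+ 2; set B := \sum_i b i ^+ 2; set S := \sum_i a i * b i.
(* Lagrange's identity: 2 (A B - S^2) is the sum of all (a i b j - a j b i)^2. *)
suff : 0 <= A * B + B * A - 2 * (S * S) by rewrite expr2; lra.
rewrite !big_distrlr mulr_sumr -big_split -sumrB /=.
apply: sumr_ge0 => i _; rewrite mulr_sumr -big_split -sumrB /=.
apply: sumr_ge0 => j _.
have -> : a i ^+ 2 * b j ^+ 2 + b i ^+ 2 * a j ^+ 2 - 2 * (a i * b i * (a j * b j))
  = (a i * b j - a j * b i) ^+ 2 by ring.
exact: sqr_ge0.
Qed.

Lemma sqrt_sum_sqr_le {n} (c : 'I_n -> R) e : (forall i, `|c i| <= e) ->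
  Num.sqrt (\sum_i c i ^+ 2) <= Num.sqrt n%:R * e.
Proof.
case: n c => [|n] c ce; first by rewrite big_ord0 sqrtr0 mul0r.
have e0 : 0 <= e := le_trans (normr_ge0 _) (ce ord0).
rewrite -[e]ger0_norm // -sqrtr_sqr -sqrtrM // ler_sqrt ?mulr_ge0 ?sqr_ge0 //.
rewrite mulr_natl -[in leRHS](card_ord n.+1) -sumr_const; apply: ler_sum => i _.
by rewrite -real_normK ?num_real // ler_sqr ?nnegrE.
Qed.

Definition vnorm {n} (v : 'cV[R]_n) := Num.sqrt (\sum_i v i 0 ^+ 2).

Lemma vnorm_ge0 {n} (v : 'cV[R]_n) : 0 <= vnorm v.
Proof. exact: sqrtr_ge0. Qed.

Lemma vnorm_eq0 {n} (v : 'cV[R]_n) : (vnorm v == 0) = (v == 0).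
Proof.
apply/idP/eqP => [|->]; last by rewrite /vnorm big1 ?sqrtr0 // => i _; rewrite mxE expr0n.
have v2_ge0 i : true -> 0 <= v i 0 ^+ 2 by rewrite sqr_ge0.
rewrite sqrtr_eq0 le_eqVlt ltNge sumr_ge0 // orbF => /eqP/psumr_eq0P-/(_ v2_ge0) v0.
by apply/matrixP => i j; rewrite (ord1 j) mxE; apply/eqP; rewrite -sqrf_eq0 v0.
Qed.

Lemma vnorm_dot_le {n} (c : 'I_n -> R) e (v : 'cV[R]_n) : (forall i, `|c i| <= e) ->
  `|\sum_i c i * v i 0| <= Num.sqrt n%:R * e * vnorm v.
Proof.
move=> ce; apply: le_trans (CauchySchwarz_sum _ _) _.
by apply: ler_wpM2r; [exact: vnorm_ge0 | exact: sqrt_sum_sqr_le].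
Qed.

Lemma vnorm_mul_le {n} (M : 'M[R]_n) e (v : 'cV[R]_n) : (forall i j, `|M i j| <= e) ->
  vnorm (M *m v) <= n%:R * e * vnorm v.
Proof.
move=> Me; rewrite -[n%:R]sqr_sqrtr // expr2 -!mulrA.
by apply: sqrt_sum_sqr_le => i; rewrite mxE mulrA; exact: vnorm_dot_le.
Qed.

Lemma vnorm_col_le {n} (y : 'I_n -> R) Y : (forall i, `|y i| <= Y) ->
  vnorm (\col_i y i) <= Num.sqrt n%:R * Y.
Proof. by move=> yY; apply: sqrt_sum_sqr_le => i; rewrite mxE. Qed.

Definition psdmx {n} (K : 'M[R]_n) :=
  forall c : 'I_n -> R, 0 <= \sum_i \sum_j c i * c j * K i j.

Lemma psdmx_shift_vnorm {n} (K : 'M[R]_n) s2 (v : 'cV[R]_n) : psdmx K -> 0 <= s2 ->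
  s2 * vnorm v <= vnorm ((K + s2%:M) *m v).
Proof.
move=> psdK s0; set u := _ *m v.
have quad : s2 * vnorm v ^+ 2 <= \sum_i v i 0 * u i 0.
  have -> : \sum_i v i 0 * u i 0 =
      \sum_i \sum_j v i 0 * v j 0 * K i j + s2 * vnorm v ^+ 2.
    rewrite sqr_sqrtr ?sumr_ge0 // => [|i _]; last exact: sqr_ge0.
    rewrite mulr_sumr -big_split; apply: eq_bigr => i _ /=.
    rewrite /u mulmxDl mul_scalar_mx !mxE mulrDr mulr_sumr; congr (_ + _); last by ring.
    by apply: eq_bigr => j _; ring.
  by rewrite lerDr; exact: psdK.
have cs := le_trans (ler_norm _) (CauchySchwarz_sum (fun i => v i 0) (fun i => u i 0)).
have [v0|v_neq0] := eqVneq (vnorm v) 0; first by rewrite v0 mulr0 vnorm_ge0.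
have v_gt0 : 0 < vnorm v by rewrite lt_def v_neq0 vnorm_ge0.
by rewrite -(ler_pM2l v_gt0) mulrCA -expr2; exact: le_trans quad cs.
Qed.

Lemma psdmx_shift_unit {n} (K : 'M[R]_n) s2 : psdmx K -> 0 < s2 -> K + s2%:M \in unitmx.
Proof.
move=> psdK s0; rewrite -unitmx_tr -row_free_unit; apply: inj_row_free => v.
move=> /(congr1 trmx); rewrite trmx_mul trmxK trmx0 => Av0.
have := psdmx_shift_vnorm K s2 v^T psdK (ltW s0).
rewrite Av0 (eqP (_ : vnorm (0 : 'cV[R]_n) == 0)) ?vnorm_eq0 // pmulr_rle0 // => v_le0.
have /eqP/(congr1 trmx) : v^T == 0 by rewrite -vnorm_eq0 eq_le v_le0 vnorm_ge0.
by rewrite trmxK trmx0.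
Qed.

Lemma vnorm_invmx_le {n} (K : 'M[R]_n) s2 (u : 'cV[R]_n) : psdmx K -> 0 < s2 ->
  s2 * vnorm (invmx (K + s2%:M) *m u) <= vnorm u.
Proof.
move=> psdK s0; have := psdmx_shift_vnorm K s2 (invmx (K + s2%:M) *m u) psdK (ltW s0).
by rewrite mulKVmx // psdmx_shift_unit.
Qed.

End vector_norm.

Section gp_mean_perturbation.
Context {R : realType}.

Lemma gram_psdmx (X : Type) (k : X -> X -> R) n (xs : 'I_n -> X) :
  kernel_psd k -> psdmx (\matrix_(i, j) k (xs i) (xs j)).
Proof. by move=> psd_k c; under eq_bigr do under eq_bigr do rewrite mxE; exact: psd_k. Qed.

Lemma gp_meanE (X : Type) (k : X -> X -> R) s2 n (xs : 'I_n -> X) ys x :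
  gp_mean k s2 xs ys x = \sum_i k x (xs i) *
    (invmx (\matrix_(i, j) k (xs i) (xs j) + s2%:M) *m \col_i ys i) i 0.
Proof. by rewrite /gp_mean -mulmxA mxE; apply: eq_bigr => i _; rewrite mxE. Qed.

Lemma gp_mean_perturbation (X : Type) (k1 k2 : X -> X -> R) (s2 e Kb Y : R) n
    (xs : 'I_n -> X) (ys : 'I_n -> R) (x : X) :
  0 < s2 -> 0 <= Y -> kernel_psd k1 -> kernel_psd k2 ->
  (forall a b, `|k2 a b - k1 a b| <= e) -> (forall a b, `|k2 a b| <= Kb) ->
  (forall i, `|ys i| <= Y) ->
  `|gp_mean k1 s2 xs ys x - gp_mean k2 s2 xs ys x|
    <= n%:R * e * Y / s2 + n%:R ^+ 2 * Kb * e * Y / s2 ^+ 2.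
Proof.
move=> s0 Y0 psd1 psd2 k21 k2b yY.
have e0 : 0 <= e := le_trans (normr_ge0 _) (k21 x x).
have Kb0 : 0 <= Kb := le_trans (normr_ge0 _) (k2b x x).
rewrite !gp_meanE.
set K1 := \matrix_(i, j) k1 _ _; set K2 := \matrix_(i, j) k2 _ _.
set a := invmx (K1 + s2%:M) *m _; set b := invmx (K2 + s2%:M) *m _.
have P1 : psdmx K1 by exact: gram_psdmx.
have P2 : psdmx K2 by exact: gram_psdmx.
pose r := Num.sqrt (n%:R : R).
have r0 : 0 <= r := sqrtr_ge0 _.
have rr : r * r = n%:R by rewrite -expr2 sqr_sqrtr.
have a_le : s2 * vnorm a <= r * Y.
  exact: le_trans (vnorm_invmx_le K1 s2 _ P1 s0) (vnorm_col_le _ _ yY).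
have b_le : s2 * vnorm b <= r * Y.
  exact: le_trans (vnorm_invmx_le K2 s2 _ P2 s0) (vnorm_col_le _ _ yY).
have d_le : s2 * vnorm (a - b) <= n%:R * e * vnorm b.
  have <- : invmx (K1 + s2%:M) *m ((K2 - K1) *m b) = a - b.
    have -> : K2 - K1 = (K2 + s2%:M) - (K1 + s2%:M).
      by rewrite opprD addrACA subrr addr0.
    by rewrite mulmxBl mulmxBr mulKVmx ?mulKmx ?psdmx_shift_unit.
  apply: le_trans (vnorm_invmx_le _ _ _ P1 s0) _.
  by apply: vnorm_mul_le => i j; rewrite !mxE.
have -> : \sum_i k1 x (xs i) * a i 0 - \sum_i k2 x (xs i) * b i 0 =
    \sum_i (k1 x (xs i) - k2 x (xs i)) * a i 0 + \sum_i k2 x (xs i) * (a - b) i 0.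
  have abE i : (a - b) i 0 = a i 0 - b i 0 by rewrite !mxE.
  by rewrite -sumrB -big_split; apply: eq_bigr => i _; rewrite abE /=; ring.
have T1_le : `|\sum_i (k1 x (xs i) - k2 x (xs i)) * a i 0| <=
    r * e * vnorm a by apply: vnorm_dot_le => i; rewrite distrC.
have T2_le : `|\sum_i k2 x (xs i) * (a - b) i 0| <=
    r * Kb * vnorm (a - b) by exact: vnorm_dot_le.
apply: le_trans (ler_normD _ _) _; rewrite -rr in d_le *; apply: lerD.
  rewrite ler_pdivlMr // mulrC.
  have := ler_wpM2l (ltW s0) T1_le.
  have := ler_wpM2l (mulr_ge0 r0 e0) a_le.
  lra.
rewrite ler_pdivlMr ?exprn_gt0 // mulrC.
have s2_ge0 := ltW s0.
have := ler_wpM2l (sqr_ge0 s2) T2_le.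
have := ler_wpM2l (mulr_ge0 (mulr_ge0 r0 Kb0) s2_ge0) d_le.
have := ler_wpM2l (mulr_ge0 (mulr_ge0 (mulr_ge0 r0 Kb0) (mulr_ge0 r0 r0)) e0) b_le.
lra.
Qed.

End gp_mean_perturbation.

Section empirical_kernel.
Context {R : realType} {X : Type} {p : nat}.
Variable g : X -> 'rV[R]_p.

Lemma emp_kernelE x x' : emp_kernel g x x' = \sum_j g x 0 j * g x' 0 j.
Proof. by rewrite /emp_kernel mxE; apply: eq_bigr => j _; rewrite mxE. Qed.

Lemma emp_kernel_psd : kernel_psd (emp_kernel g).
Proof.
move=> n xs c.
have -> : \sum_(i < n) \sum_(j < n) c i * c j * emp_kernel g (xs i) (xs j) =
    \sum_(l < p) (\sum_(i < n) c i * g (xs i) 0 l) ^+ 2.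
  under [RHS]eq_bigr => l _ do rewrite expr2 mulr_suml.
  rewrite [RHS]exchange_big /=; apply: eq_bigr => i _.
  under [RHS]eq_bigr => l _ do rewrite mulr_sumr.
  rewrite [RHS]exchange_big /=; apply: eq_bigr => j _.
  by rewrite emp_kernelE mulr_sumr; apply: eq_bigr => l _; ring.
by apply: sumr_ge0 => l _; exact: sqr_ge0.
Qed.

Lemma emp_kernel_bounded Kb : (forall x, emp_kernel g x x <= Kb) ->
  forall x x', `|emp_kernel g x x'| <= Kb.
Proof.
move=> diag x x'.
have diagE y : emp_kernel g y y = \sum_j g y 0 j ^+ 2.
  by rewrite emp_kernelE; apply: eq_bigr => j _; rewrite expr2.
have Kb0 : 0 <= Kb.
  by apply: le_trans (diag x); rewrite diagE sumr_ge0 // => j _; exact: sqr_ge0.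
rewrite emp_kernelE; apply: le_trans (CauchySchwarz_sum _ _) _.
rewrite -(sqr_sqrtr Kb0) expr2.
by apply: ler_pM; rewrite ?sqrtr_ge0 ?ler_sqrt // -diagE.
Qed.

End empirical_kernel.

Lemma perturbation_coef_le (R : realFieldType) (s2 K0 e : R) (n t : nat) :
  0 < s2 -> s2 <= 1 -> e <= 1 -> (n < t)%N ->
  n%:R / s2 + n%:R ^+ 2 * (K0 + e) / s2 ^+ 2 <= 2 * Num.max 1 K0 * t%:R ^+ 2 / s2 ^+ 2.
Proof.
move=> s0 s1 e1 nt; set M := Num.max 1 K0.
have M1 : 1 <= M by rewrite le_max lexx.
have K0M : K0 <= M by rewrite le_max lexx orbT.
have n0 : 0 <= n%:R :> R := ler0n _ n.
have nt' : n%:R + 1 <= t%:R :> R by rewrite natr1 ler_nat.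
have -> : n%:R / s2 + n%:R ^+ 2 * (K0 + e) / s2 ^+ 2 =
    (n%:R * s2 + n%:R ^+ 2 * (K0 + e)) / s2 ^+ 2 by field; rewrite gt_eqF.
rewrite ler_pM2r ?invr_gt0 ?exprn_gt0 //.
have := ler_wpM2l n0 s1.
have : n%:R ^+ 2 * (K0 + e) <= n%:R ^+ 2 * (2 * M).
  by apply: ler_wpM2l; [exact: sqr_ge0 | lra].
have : (n%:R + 1) ^+ 2 <= t%:R ^+ 2 :> R by rewrite ler_sqr ?nnegrE ?addr_ge0.
have M2 : 0 <= 2 * M by lra.
move=> /(ler_wpM2l M2); have := ler_wpM2l n0 M1.
lra.
Qed.

Lemma mu_fb_emp_kernel_le (R : realType) (d : measure_display) (Omega : measurableType d)
    (X : Type) (f : X -> R) (B' sigma c K0 e : R) (k : X -> X -> R) (p : nat)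
    (g : X -> 'rV[R]_p) (zeta : nat -> Omega -> R) (xq : nat -> Omega -> X)
    (fb : nat -> Omega -> nat) (t : nat) (w : Omega) :
  (forall x, `|f x| <= B') -> 0 < sigma -> sigma ^+ 2 <= 1 -> 0 <= c ->
  kernel_psd k -> (forall x x', k x x' <= K0) ->
  (forall x x', `|emp_kernel g x x' - k x x'| <= e) -> e <= 1 ->
  (fb t w < t)%N -> (forall tau, (1 <= tau <= fb t w)%N -> `|zeta tau w| <= c) ->
  forall x, `|mu_fb k sigma f zeta xq fb t w x - mu_fb (emp_kernel g) sigma f zeta xq fb t w x|
    <= 2 * Num.max 1 K0 * ((t ^ 2)%:R * e / sigma ^+ 4) * (B' + c).
Proof.
move=> fB s0 s1 c0 psd_k kK0 ke e1 fbt zc x.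
have e0 : 0 <= e := le_trans (normr_ge0 _) (ke x x).
have Y0 : 0 <= B' + c := addr_ge0 (le_trans (normr_ge0 _) (fB x)) c0.
have diag a : emp_kernel g a a <= K0 + e.
  by have := kK0 a a; move: (ke a a); rewrite ler_norml => /andP[_]; lra.
have yY (i : 'I_(fb t w)) : `|f (xq i.+1 w) + zeta i.+1 w| <= B' + c.
  by apply: le_trans (ler_normD _ _) _; apply: lerD => //; apply: zc; rewrite /= ltn_ord.
apply: le_trans.
  apply: (@gp_mean_perturbation _ _ _ _ _ e (K0 + e) (B' + c)) => //.
  - by rewrite exprn_gt0.
  - exact: emp_kernel_psd.
  - exact: emp_kernel_bounded.
have -> : (fb t w)%:R * e * (B' + c) / sigma ^+ 2 +
    (fb t w)%:R ^+ 2 * (K0 + e) * e * (B' + c) / (sigma ^+ 2) ^+ 2 =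
    ((fb t w)%:R / sigma ^+ 2 + (fb t w)%:R ^+ 2 * (K0 + e) / (sigma ^+ 2) ^+ 2)
      * (e * (B' + c)) by ring.
have -> : 2 * Num.max 1 K0 * ((t ^ 2)%:R * e / sigma ^+ 4) * (B' + c) =
    2 * Num.max 1 K0 * t%:R ^+ 2 / (sigma ^+ 2) ^+ 2 * (e * (B' + c)).
  by rewrite natrX -exprM; ring.
apply: ler_wpM2r; first exact: mulr_ge0.
by apply: perturbation_coef_le; rewrite ?exprn_gt0.
Qed.

Theorem lemma10 (R : realType) (d : measure_display) (Omega : measurableType d)
  (P : probability Omega R) (X : finType) (f : X -> R) (B' sigma delta : R)
  (T : nat) (k : X -> X -> R) (K0 : R) (p : nat) (g : X -> 'rV[R]_p)
  (L : nat) (eps : R) (zeta : nat -> {RV P >-> R})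
  (xq : nat -> Omega -> X) (fb : nat -> Omega -> nat) :
  (forall x, `|f x| <= B') ->
  0 < sigma -> sigma ^+ 2 <= 1 ->
  0 < delta -> delta < 1 ->
  kernel_sym k -> kernel_psd k -> (forall x x', k x x' <= K0) ->
  (forall x x', `|emp_kernel g x x' - k x x'| <= L.+1%:R * eps) ->
  L.+1%:R * eps <= 1 ->
  (forall tau, (1 <= tau <= T)%N -> normal_law P (zeta tau) sigma) ->
  mutually_independent P (fun tau => zeta tau : Omega -> R) T ->
  (forall t w, (fb t w <= t - 1)%N) ->
  exists E : set Omega, measurable E /\ (P E >= (1 - delta / 4)%:E)%E /\
    forall w, E w -> forall t, (1 <= t <= T)%N -> forall x : X,
      `|mu_fb k sigma f (fun tau => zeta tau : Omega -> R) xq fb t w x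
        - mu_fb (emp_kernel g) sigma f (fun tau => zeta tau : Omega -> R) xq fb t w x|
      <= 2 * Num.max 1 K0 * ((t ^ 2)%:R * (L.+1%:R * eps) / sigma ^+ 4)
         * (B' + sigma * Num.sqrt (2 * ln (4 * T%:R / delta))).
Proof.
move=> fB s0 s1 d0 d1 _ psd_k kK0 ke e1 law _ fbt.
set c := sigma * Num.sqrt _.
have c0 : 0 <= c by rewrite mulr_ge0 ?sqrtr_ge0 ?ltW.
have [E [mE PE Ec]] := @normal_noise_bounded_event _ _ _ P zeta sigma c T s0 c0 law.
exists E; split => //; split.
  apply: le_trans PE; rewrite lee_fin lerD2l lerN2.
  by apply: gauss_threshold_union_le; rewrite // d0 ltW.
move=> w Ew t /andP[t1 tT] x.
have fb_lt : (fb t w < t)%N by apply: leq_ltn_trans (fbt t w) _; rewrite subn1 prednK.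
apply: mu_fb_emp_kernel_le => // tau /andP[tau1 tau_fb]; apply: Ec => //.
by rewrite tau1 (leq_trans tau_fb) // (leq_trans (ltnW fb_lt)).
Qed.
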